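(* Let $K$ be an algebraically closed field complete with respect to a nontrivial nonarchimedean absolute value, let $a\in K^N$ and $r\in|K^*|$, and let $\mathcal{A}$ be a family of analytic functions on $\bar B(a,r)$. Assume there is a constant $C>0$ with $|\Psi(x)|\le C$ for all $x\in\bar B(a,r)$ and all $\Psi\in\mathcal{A}$. Then for all $x,y\in\bar B(a,r)$ and all $\Psi,\Lambda\in\mathcal{A}$, $$|\Psi(x)\Lambda(y)-\Psi(y)\Lambda(x)|\le\frac{C^2}{r}\|x-y\|.$$
   Context: For $x\in K^N$, $\|x\|=\max_i|x_i|$, and $\bar B(a,r)=\{x\in K^N:\|x-a\|\le r\}$. A formal power series $\Psi(x)=\sum_{i_1,\dots,i_N\ge0}c_{i_1\cdots i_N}(x_1-a_1)^{i_1}\cdots(x_N-a_N)^{i_N}$ with $c_{i_1\cdots i_N}\in K$ is analytic on $\bar B(a,r)$ if $|c_{i_1\cdots i_N}|\,r^{i_1+\cdots+i_N}\to0$ as $i_1+\cdots+i_N\to\infty$; it then defines a function $\Psi:\bar B(a,r)\to K$. *)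

From mathcomp Require Import all_boot all_order all_algebra.
From mathcomp Require Import boolp classical_sets reals.
Set Implicit Arguments. Unset Strict Implicit. Unset Printing Implicit Defensive.
Import Order.TTheory GRing.Theory Num.Theory.
Local Open Scope ring_scope.

Section NonArch.
Variables (R : realType) (K : fieldType) (abs : K -> R).

Definition is_nonarch_abs : Prop :=
  [/\ forall x, 0 <= abs x,
      forall x, abs x = 0 <-> x = 0,
      forall x y, abs (x * y) = abs x * abs y &
      forall x y, abs (x + y) <= Num.max (abs x) (abs y)].

Definition abs_nontrivial : Prop := exists x : K, abs x != 0 /\ abs x != 1.

Definition abs_cvg (u : nat -> K) (l : K) : Prop :=
  forall eps : R, 0 < eps -> exists M : nat, forall n, (M <= n)%N -> abs (u n - l) < eps.

Definition abs_complete : Prop :=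
  forall u : nat -> K,
    (forall eps : R, 0 < eps -> exists M : nat,
        forall m n, (M <= m)%N -> (M <= n)%N -> abs (u m - u n) < eps) ->
    exists l, abs_cvg u l.

Definition in_value_group (r : R) : Prop := exists t : K, t != 0 /\ abs t = r.

Variable N : nat.

Definition vnorm (x : 'I_N -> K) : R := \big[Num.max/0]_(i < N) abs (x i).

Definition cball (a : 'I_N -> K) (r : R) : set ('I_N -> K) :=
  [set x | vnorm (fun i => x i - a i) <= r].

Definition mindex := 'I_N -> nat.
Definition mdeg (i : mindex) : nat := (\sum_(j < N) i j)%N.

(* formal power series centered at a: coefficient family *)
Definition pseries := mindex -> K.

Definition analytic_on (r : R) (c : pseries) : Prop :=
  forall eps : R, 0 < eps -> exists M : nat,
    forall i : mindex, (M <= mdeg i)%N -> abs (c i) * r ^+ mdeg i < eps.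

Definition monom (a x : 'I_N -> K) (i : mindex) : K :=
  \prod_(j < N) (x j - a j) ^+ i j.

Definition psum (c : pseries) (a x : 'I_N -> K) (M : nat) : K :=
  \sum_(i : {ffun 'I_N -> 'I_M.+1} | (\sum_(j < N) (i j : nat) <= M)%N)
     c (fun j => (i j : nat)) * monom a x (fun j => (i j : nat)).

Definition peval (c : pseries) (a x : 'I_N -> K) : K :=
  xget 0 [set v | abs_cvg (psum c a x) v].

End NonArch.

(* If every coefficient of Psi satisfies |c_i| r^|i| <= C, then each monomial
   (x - a)^i is (|x - y| / r) r^|i|-Lipschitz on the ball by the ultrametric
   inequality, hence Psi is (C / r)-Lipschitz, and the bound follows from
   Psi(x)Lam(y) - Psi(y)Lam(x) = (Psi(x) - Psi(y))Lam(y) - Psi(y)(Lam(x) - Lam(y)).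
   That |c_i| r^|i| <= sup |Psi| is a Cauchy estimate.  Take |t| = r and a degree
   M beyond which all terms are smaller than m = |c_i0| r^|i0|.  The Kronecker
   substitution x_j = a_j + t w^((M+1)^j) turns the terms of degree <= M into a
   polynomial Q(w) with c_i0 t^|i0| among its coefficients; as K is algebraically
   closed, some |w| <= 1 has |Q(w)| >= max_k |Q_k| >= m, and then |Psi(x)| >= m as
   the remaining terms are smaller. *)

From mathcomp Require Import all_boot all_order all_algebra.
From mathcomp Require Import boolp classical_sets reals.
From mathcomp Require Import ring lra.
Import Order.TTheory GRing.Theory Num.Theory.
Set Implicit Arguments. Unset Strict Implicit. Unset Printing Implicit Defensive.
Local Open Scope ring_scope.

Definition mindex_of N M (i : {ffun 'I_N -> 'I_M.+1}) : mindex N := fun j => i j.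

Lemma mdeg_ge N (i : mindex N) j : (i j <= mdeg i)%N.
Proof. by rewrite /mdeg (bigD1 j) //= leq_addr. Qed.

Lemma sum_mindex_widen (V : nmodType) N k1 k2 (P : pred (mindex N)) (F : mindex N -> V) :
  (k1 <= k2)%N -> (forall i, P i -> forall j, (i j <= k1)%N) ->
  \sum_(i : {ffun 'I_N -> 'I_k1.+1} | P (mindex_of i)) F (mindex_of i) =
  \sum_(i : {ffun 'I_N -> 'I_k2.+1} | P (mindex_of i)) F (mindex_of i).
Proof.
move=> le12 hP; have le : (k1.+1 <= k2.+1)%N by [].
pose widen (i : {ffun 'I_N -> 'I_k1.+1}) := [ffun j => widen_ord le (i j)].
pose narrow (i : {ffun 'I_N -> 'I_k2.+1}) := [ffun j => inord (i j) : 'I_k1.+1].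
have widenE i : mindex_of (widen i) = mindex_of i.
  by apply: funext => j; rewrite /mindex_of ffunE.
rewrite (reindex_onto widen narrow) => [|i Pi]; last first.
  by apply/ffunP => j; apply/val_inj; rewrite !ffunE /= inordK // ltnS; apply: (hP _ Pi).
apply: eq_big => [i|i _]; rewrite widenE //.
have -> : narrow (widen i) == i.
  by apply/eqP/ffunP => j; apply/val_inj; rewrite !ffunE /= inordK.
by rewrite andbT.
Qed.

Lemma psumE (K : fieldType) N (c : pseries K N) a x M :
  psum c a x M = \sum_(i : {ffun 'I_N -> 'I_M.+1} | (mdeg (mindex_of i) <= M)%N)
                   c (mindex_of i) * monom a x (mindex_of i).
Proof. by []. Qed.

Lemma psumB (K : fieldType) N (c : pseries K N) a x M n : (M <= n)%N ->
  psum c a x n - psum c a x M =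
  \sum_(i : {ffun 'I_N -> 'I_n.+1} | (M < mdeg (mindex_of i) <= n)%N)
     c (mindex_of i) * monom a x (mindex_of i).
Proof.
move=> Mn; rewrite !psumE.
rewrite (@sum_mindex_widen _ N M n (fun i => mdeg i <= M)%N (fun i => c i * monom a x i)) //;
  last first.
  by move=> i Mi j; apply: leq_trans (mdeg_ge i j) Mi.
rewrite (bigID (fun i => mdeg (mindex_of i) <= M)%N) /=.
have lowE (d : nat) : ((d <= n) && (d <= M))%N = (d <= M)%N.
  by apply/andb_idl => /leq_trans; apply.
under eq_bigl => i do rewrite lowE.
rewrite addrAC subrr add0r; apply: eq_bigl => i.
by rewrite -ltnNge andbC.
Qed.

Definition kronecker N (D : nat) (i : mindex N) : nat := (\sum_(j < N) i j * D ^ j)%N.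

Lemma kronecker_inj N D (i i' : mindex N) :
  (forall j, i j < D)%N -> (forall j, i' j < D)%N ->
  kronecker D i = kronecker D i' -> i =1 i'.
Proof.
elim: N i i' => [|N IH] i i' hi hi' e j; first by case: j.
have D0 : (0 < D)%N := leq_ltn_trans (leq0n _) (hi ord0).
have shift (f : mindex N.+1) :
    (\sum_(k < N) f (lift ord0 k) * D ^ bump 0 k = D * kronecker D (f \o lift ord0))%N.
  by rewrite /kronecker big_distrr; apply: eq_bigr => k _; rewrite expnS mulnCA.
move: e; rewrite /kronecker !big_ord_recl !expn0 !muln1 !shift => e.
have e0 : i ord0 = i' ord0.
  have := congr1 (modn^~ D) e; rewrite /= ![(_ + D * _)%N]addnC ![(D * _)%N]mulnC.
  by rewrite !modnMDl !modn_small.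
move: e; rewrite e0 => /addnI /eqP; rewrite eqn_pmul2l // => /eqP e.
case: (unliftP ord0 j) => [k ->|->] //.
exact: (IH (i \o lift ord0) (i' \o lift ord0) (fun _ => hi _) (fun _ => hi' _) e).
Qed.

Lemma monom_kronecker (K : fieldType) N (a : 'I_N -> K) (t w : K) D i :
  monom a (fun j => a j + t * w ^+ (D ^ j)) i = t ^+ mdeg i * w ^+ kronecker D i.
Proof.
rewrite /monom /mdeg /kronecker -!prodrXr -big_split; apply: eq_bigr => j _.
by rewrite addrC addKr exprMn -exprM mulnC.
Qed.

Lemma coef_sum_scaleXn (S : nzRingType) (I : finType) (P : pred I) (e : I -> S)
    (f : I -> nat) i0 : P i0 -> {in P &, injective f} ->
  (\sum_(i | P i) e i *: 'X^(f i))`_(f i0) = e i0.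
Proof.
move=> Pi0 inj; rewrite coef_sum (bigD1 i0) //= coefZ coefXn eqxx mulr1.
rewrite big1 ?addr0 // => i /andP [Pi ne]; rewrite coefZ coefXn.
by case: eqP => [/(inj _ _ Pi0 Pi) eqi|]; [rewrite eqi eqxx in ne | rewrite mulr0].
Qed.

Section KroneckerPoly.
Variables (K : fieldType) (N : nat) (c : pseries K N) (t : K) (M : nat).

Definition kronecker_poly : {poly K} :=
  \sum_(i : {ffun 'I_N -> 'I_M.+1} | (mdeg (mindex_of i) <= M)%N)
     (c (mindex_of i) * t ^+ mdeg (mindex_of i)) *: 'X^(kronecker M.+1 (mindex_of i)).

Lemma horner_kronecker_poly a w :
  kronecker_poly.[w] = psum c a (fun j => a j + t * w ^+ (M.+1 ^ j)) M.
Proof.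
rewrite horner_sum psumE; apply: eq_bigr => i _.
by rewrite hornerZ hornerXn monom_kronecker mulrA.
Qed.

Lemma coef_kronecker_poly i0 : (mdeg i0 <= M)%N ->
  kronecker_poly`_(kronecker M.+1 i0) = c i0 * t ^+ mdeg i0.
Proof.
move=> i0M; pose i0' : {ffun 'I_N -> 'I_M.+1} := [ffun j => inord (i0 j)].
have i0'E : mindex_of i0' = i0.
  apply: funext => j; rewrite /mindex_of ffunE inordK // ltnS.
  exact: leq_trans (mdeg_ge i0 j) i0M.
rewrite -i0'E coef_sum_scaleXn ?i0'E // => i i' _ _ eq_ii'.
apply/ffunP => j; apply/val_inj.
exact: (kronecker_inj (fun j => ltn_ord (i j)) (fun j => ltn_ord (i' j)) eq_ii').
Qed.

End KroneckerPoly.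

Section Ultrametric.
Variables (R : realType) (K : fieldType) (abs : K -> R).
Hypothesis habs : is_nonarch_abs abs.

Lemma abs_ge0 x : 0 <= abs x. Proof. by case: habs. Qed.

Lemma abs_eq0 x : (abs x == 0) = (x == 0).
Proof. by case: habs => _ h _ _; apply/eqP/eqP => /h. Qed.

Lemma abs0 : abs 0 = 0. Proof. by apply/eqP; rewrite abs_eq0. Qed.

Lemma abs_gt0 x : x != 0 -> 0 < abs x.
Proof. by move=> x0; rewrite lt_def abs_eq0 x0 abs_ge0. Qed.

Lemma absM x y : abs (x * y) = abs x * abs y. Proof. by case: habs. Qed.

Lemma absD x y : abs (x + y) <= Num.max (abs x) (abs y). Proof. by case: habs. Qed.

Lemma abs1 : abs 1 = 1.
Proof.
have e : abs 1 * abs 1 = 1 * abs 1 by rewrite -absM !mul1r.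
by apply: (mulIf _ e); rewrite abs_eq0 oner_eq0.
Qed.

Lemma absN x : abs (- x) = abs x.
Proof.
have : abs (-1) ^+ 2 == 1 by rewrite expr2 -absM mulrNN mulr1 abs1.
by rewrite sqrp_eq1 ?abs_ge0 // => /eqP e; rewrite -mulN1r absM e mul1r.
Qed.

Lemma absB x y : abs (x - y) <= Num.max (abs x) (abs y).
Proof. by rewrite -(absN y) absD. Qed.

Lemma absBC x y : abs (x - y) = abs (y - x).
Proof. by rewrite -absN opprB. Qed.

Lemma absX x n : abs (x ^+ n) = abs x ^+ n.
Proof. by elim: n => [|n IH]; rewrite ?expr0 ?abs1 // !exprS absM IH. Qed.

Lemma abs_prod (I : Type) (s : seq I) (F : I -> K) :
  abs (\prod_(i <- s) F i) = \prod_(i <- s) abs (F i).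
Proof. by elim: s => [|x s IH]; rewrite ?big_nil ?abs1 // !big_cons absM IH. Qed.

Lemma absD_le x y (B : R) : abs x <= B -> abs y <= B -> abs (x + y) <= B.
Proof. by move=> hx hy; apply: le_trans (absD x y) _; rewrite ge_max hx. Qed.

Lemma absB_le x y (B : R) : abs x <= B -> abs y <= B -> abs (x - y) <= B.
Proof. by move=> hx hy; apply: absD_le; rewrite ?absN. Qed.

Lemma absD_lt x y (B : R) : abs x < B -> abs y < B -> abs (x + y) < B.
Proof. by move=> hx hy; apply: le_lt_trans (absD x y) _; rewrite gt_max hx. Qed.

Lemma absD_eq x y : abs y < abs x -> abs (x + y) = abs x.
Proof.
move=> lt; apply/eqP; rewrite eq_le; apply/andP; split.
  by apply: absD_le => //; apply: ltW.
have := absD (x + y) (- y); rewrite addrK absN le_max => /orP [//|yx].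
by move: (le_lt_trans yx lt); rewrite ltxx.
Qed.

Lemma abs_sum_le (I : Type) (s : seq I) (P : pred I) (F : I -> K) (B : R) :
  0 <= B -> (forall i, P i -> abs (F i) <= B) -> abs (\sum_(i <- s | P i) F i) <= B.
Proof.
move=> B0 hF; apply: (big_ind (fun v => abs v <= B)) => //; first by rewrite abs0.
by move=> x y; apply: absD_le.
Qed.

Lemma abs_sum_lt (I : Type) (s : seq I) (P : pred I) (F : I -> K) (B : R) :
  0 < B -> (forall i, P i -> abs (F i) < B) -> abs (\sum_(i <- s | P i) F i) < B.
Proof.
move=> B0 hF; apply: (big_ind (fun v => abs v < B)) => //; first by rewrite abs0.
by move=> x y; apply: absD_lt.
Qed.

Lemma abs_le_vnorm N (v : 'I_N -> K) j : abs (v j) <= vnorm abs v.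
Proof. exact: (le_bigmax _ (fun i => abs (v i))). Qed.

Lemma vnorm_le N (v : 'I_N -> K) (B : R) :
  0 <= B -> (forall j, abs (v j) <= B) -> vnorm abs v <= B.
Proof. by move=> B0 hv; apply: bigmax_le. Qed.

Lemma vnorm_ge0 N (v : 'I_N -> K) : 0 <= vnorm abs v.
Proof.
case: N v => [|N] v; first by rewrite /vnorm big_ord0.
exact: le_trans (abs_ge0 _) (abs_le_vnorm v ord0).
Qed.

Lemma cball_coord N (a x : 'I_N -> K) r j : cball abs a r x -> abs (x j - a j) <= r.
Proof. exact: le_trans (abs_le_vnorm (fun j => x j - a j) j). Qed.

Lemma abs_monom_le N (a x : 'I_N -> K) r i :
  cball abs a r x -> abs (monom a x i) <= r ^+ mdeg i.
Proof.
move=> hx; rewrite /monom abs_prod /mdeg -prodrXr.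
apply: ler_prod => j _; have xj := cball_coord j hx.
by rewrite absX exprn_ge0 ?abs_ge0 //= lerXn2r ?nnegrE ?abs_ge0 // (le_trans (abs_ge0 _) xj).
Qed.

Lemma abs_cvg_le u l M (B : R) : abs_cvg abs u l ->
  (forall n, (M <= n)%N -> abs (u n) <= B) -> abs l <= B.
Proof.
move=> cv ub; rewrite leNgt; apply/negP => Bl.
have B0 : 0 <= B := le_trans (abs_ge0 _) (ub M (leqnn M)).
have [M' HM'] := cv (abs l - B) ltac:(by rewrite subr_gt0).
set n := maxn M M'; have := ub n (leq_maxl _ _); have := HM' n (leq_maxr _ _).
have := absD (u n) (l - u n); rewrite addrC subrK absBC le_max.
by move=> /orP[]; lra.
Qed.

Lemma abs_cvg_ge u l M (B : R) : abs_cvg abs u l ->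
  (forall n, (M <= n)%N -> B <= abs (u n)) -> B <= abs l.
Proof.
move=> cv lb; rewrite leNgt; apply/negP => lB; have := abs_ge0 l.
have [M' HM'] := cv (B - abs l) ltac:(by rewrite subr_gt0).
set n := maxn M M'; have := lb n (leq_maxl _ _); have := HM' n (leq_maxr _ _).
have := absD l (u n - l); rewrite addrC subrK le_max.
by move=> /orP[]; lra.
Qed.

Lemma abs_cvgB u v l l' : abs_cvg abs u l -> abs_cvg abs v l' ->
  abs_cvg abs (fun n => u n - v n) (l - l').
Proof.
move=> cu cv e e0; have [M1 H1] := cu e e0; have [M2 H2] := cv e e0.
exists (maxn M1 M2) => n; rewrite geq_max => /andP [n1 n2].
have -> : u n - v n - (l - l') = (u n - l) - (v n - l') by ring.
by apply: le_lt_trans (absB _ _) _; rewrite gt_max H1 ?H2.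
Qed.

Lemma abs_prodB_le (I : Type) (s : seq I) (U V : I -> K) (rho : I -> R) (d : R) :
  0 <= d -> (forall i, abs (U i) <= rho i) -> (forall i, abs (V i) <= rho i) ->
  (forall i, abs (U i - V i) <= d * rho i) ->
  abs (\prod_(i <- s) U i - \prod_(i <- s) V i) <= d * \prod_(i <- s) rho i.
Proof.
move=> d0 hU hV hUV; elim: s => [|i s IH]; first by rewrite !big_nil subrr abs0 mulr1.
have rho0 j : 0 <= rho j := le_trans (abs_ge0 _) (hU j).
have hPU : abs (\prod_(j <- s) U j) <= \prod_(j <- s) rho j.
  by rewrite abs_prod; apply: ler_prod => j _; rewrite abs_ge0 hU.
rewrite !big_cons.
have -> : U i * \prod_(j <- s) U j - V i * \prod_(j <- s) V j =
   (U i - V i) * \prod_(j <- s) U j + V i * (\prod_(j <- s) U j - \prod_(j <- s) V j).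
  by ring.
apply: absD_le; rewrite absM.
  by rewrite mulrA ler_pM ?abs_ge0 ?hUV.
by rewrite mulrCA ler_pM ?abs_ge0 ?hV.
Qed.

Lemma abs_exprB_le (u v : K) (rho d : R) n :
  0 <= d -> abs u <= rho -> abs v <= rho -> abs (u - v) <= d * rho ->
  abs (u ^+ n - v ^+ n) <= d * rho ^+ n.
Proof.
move=> d0 hu hv huv; rewrite -(subn0 n) -!prodr_const_nat.
exact: abs_prodB_le.
Qed.

Lemma abs_monomB N (a x y : 'I_N -> K) (r : R) i : 0 < r ->
  cball abs a r x -> cball abs a r y ->
  abs (monom a x i - monom a y i) <= vnorm abs (fun j => x j - y j) / r * r ^+ mdeg i.
Proof.
move=> r0 hx hy; have d0 : 0 <= vnorm abs (fun j => x j - y j) / r.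
  by rewrite divr_ge0 ?vnorm_ge0 ?ltW.
rewrite /mdeg -prodrXr; apply: abs_prodB_le => // j.
1,2: by rewrite absX lerXn2r ?nnegrE ?abs_ge0 ?cball_coord ?(ltW r0).
apply: abs_exprB_le; rewrite ?cball_coord // divfK ?gt_eqF //.
have -> : x j - a j - (y j - a j) = x j - y j by ring.
exact: (abs_le_vnorm (fun j => x j - y j)).
Qed.

Section Series.
Variables (N : nat) (c : pseries K N) (a : 'I_N -> K) (r : R).

Lemma abs_psumB_lt x (e : R) M : 0 < e -> cball abs a r x ->
  (forall i, (M <= mdeg i)%N -> abs (c i) * r ^+ mdeg i < e) ->
  forall n, (M <= n)%N -> abs (psum c a x n - psum c a x M) < e.
Proof.
move=> e0 hx hM n Mn; rewrite psumB //; apply: abs_sum_lt => // i /andP [Mi _].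
by rewrite absM; apply: le_lt_trans (hM _ (ltnW Mi)); rewrite ler_wpM2l ?abs_ge0 ?abs_monom_le.
Qed.

Hypothesis c_an : analytic_on abs r c.
Hypothesis hcomp : abs_complete abs.

Lemma psum_cvg x : cball abs a r x -> abs_cvg abs (psum c a x) (peval abs c a x).
Proof.
move=> hx; apply: (@xgetPex _ 0 [set v | abs_cvg abs (psum c a x) v]).
apply: hcomp => e e0; have [M HM] := c_an e0; exists M => m n hm hn.
have -> : psum c a x m - psum c a x n =
   (psum c a x m - psum c a x M) - (psum c a x n - psum c a x M) by ring.
by apply: le_lt_trans (absB _ _) _; rewrite gt_max !(abs_psumB_lt e0 hx HM).
Qed.

Lemma peval_lipschitz (C : R) x y : 0 < r -> 0 <= C ->
  (forall i, abs (c i) * r ^+ mdeg i <= C) -> cball abs a r x -> cball abs a r y ->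
  abs (peval abs c a x - peval abs c a y) <= C / r * vnorm abs (fun j => x j - y j).
Proof.
move=> r0 C0 hC hx hy.
apply: (abs_cvg_le (M := 0%N) (abs_cvgB (psum_cvg hx) (psum_cvg hy))) => n _.
rewrite !psumE -sumrB; apply: abs_sum_le => [|i _].
  by rewrite mulr_ge0 ?divr_ge0 ?vnorm_ge0 // ltW.
rewrite -mulrBr absM.
apply: le_trans (ler_wpM2l (abs_ge0 _) (abs_monomB (mindex_of i) r0 hx hy)) _.
have -> : C / r * vnorm abs (fun j => x j - y j) =
          vnorm abs (fun j => x j - y j) / r * C by ring.
by rewrite mulrCA ler_wpM2l ?hC // divr_ge0 ?vnorm_ge0 ?ltW.
Qed.

End Series.

End Ultrametric.

Section ClosedField.
Variables (R : realType) (K : closedFieldType) (abs : K -> R).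
Hypothesis habs : is_nonarch_abs abs.

(* A root [u] of [\prod_(b <- B) ('X - b%:P) - 1] has [\prod_b |u - b| = 1], while
   every factor is at most [1]. *)
Lemma exists_far_from (B : seq K) : (forall b, b \in B -> abs b <= 1) ->
  exists u, abs u <= 1 /\ forall b, b \in B -> 1 <= abs (u - b).
Proof.
move=> hB; have [->|B0] := eqVneq B [::]; first by exists 0; rewrite (abs0 habs) ?ler01.
pose p : {poly K} := \prod_(b <- B) ('X - b%:P) - 1.
have [u pu] : exists u, root p u.
  apply/closed_rootP; rewrite size_polyDl size_prod_XsubC ?size_polyN ?size_poly1.
    by rewrite eqSS size_eq0.
  by rewrite ltnS lt0n size_eq0.
have prod1 : \prod_(b <- B) abs (u - b) = 1.
  move: pu; rewrite /root /p hornerD hornerN hornerC horner_prod subr_eq0 => /eqP.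
  by under eq_bigr do rewrite hornerXsubC; rewrite -(abs_prod habs) => ->; rewrite (abs1 habs).
have u1 : abs u <= 1.
  rewrite leNgt; apply/negP => u1.
  have : \prod_(b <- B) abs (u - b) = abs u ^+ size B.
    rewrite -[size B]count_predT -iter_mulr_1 -big_const_seq; apply: eq_big_seq => b bB.
    by rewrite (absD_eq habs) // (absN habs); apply: le_lt_trans (hB b bB) u1.
  by rewrite prod1 => /esym/eqP; rewrite gt_eqF // exprn_egt1 // size_eq0.
exists u; split => // b bB.
have := prod1; rewrite (big_rem _ bB) big_seq /= => <-.
rewrite ler_piMr ?(abs_ge0 habs) // prodr_ile1 // => b' /mem_rem b'B.
by rewrite (abs_ge0 habs) /=; apply: (absB_le habs) => //; apply: hB.
Qed.

Lemma abs_coef_mulXsubC_le (p : {poly K}) (b : K) (B : R) :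
  abs b <= 1 -> (forall k, abs p`_k <= B) -> forall k, abs (p * ('X - b%:P))`_k <= B.
Proof.
move=> b1 hp k; have B0 : 0 <= B := le_trans (abs_ge0 habs _) (hp 0%N).
rewrite mulrBr coefB coefMX coefMC; apply: (absB_le habs).
  by case: (k == 0)%N; rewrite ?(abs0 habs).
by rewrite (absM habs) -[B]mulr1 ler_pM ?(abs_ge0 habs).
Qed.

Lemma exists_coef_le_horner n (Q : {poly K}) (B : seq K) : (size Q <= n)%N ->
  (forall b, b \in B -> abs b <= 1) ->
  exists w, [/\ abs w <= 1, forall b, b \in B -> 1 <= abs (w - b) &
              forall k, abs Q`_k <= abs Q.[w]].
Proof.
elim: n Q B => [|n IH] Q B sQ hB; have [b0 [b01 hb0]] := exists_far_from hB.
  exists b0; split => // k; move: sQ; rewrite leqn0 size_poly_eq0 => /eqP ->.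
  by rewrite coef0 (abs0 habs) (abs_ge0 habs).
case: (pselect (exists k, abs Q.[b0] < abs Q`_k)) => [[k1 hk1]|small]; last first.
  by exists b0; split => // k; rewrite leNgt; apply/negP => ?; apply: small; exists k.
pose Q' := Q %/ ('X - b0%:P).
have eQ : Q = Q' * ('X - b0%:P) + Q.[b0]%:P.
  by rewrite {1}(divp_eq Q ('X - b0%:P)) modp_XsubC.
have sQ' : (size Q' <= n)%N by rewrite size_divp ?polyXsubC_eq0 // size_XsubC leq_subLR.
(* The point found for [Q'] also avoids [b0], so that [|Q'.[w] (w - b0)| >= |Q'.[w]|]. *)
have [|w [w1 hwB hw]] := IH Q' (b0 :: B) sQ'.
  by move=> b; rewrite inE => /predU1P [->|/hB].
set E := Q'.[w] * (w - b0).
have hE : abs Q'.[w] <= abs E.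
  by rewrite /E (absM habs) ler_peMr ?(abs_ge0 habs) ?hwB ?mem_head.
have coefQ k : abs Q`_k <= Num.max (abs Q'.[w]) (abs Q.[b0]).
  rewrite {1}eQ coefD coefC; apply: (absD_le habs).
    by rewrite le_max (abs_coef_mulXsubC_le b01 hw).
  by case: (k == 0)%N; rewrite ?(abs0 habs) le_max ?lexx ?orbT ?(abs_ge0 habs).
have Qb0E : abs Q.[b0] < abs E.
  have := coefQ k1; rewrite le_max => /orP [|]; last by rewrite leNgt hk1.
  by move=> h; apply: lt_le_trans hk1 (le_trans h hE).
have QwE : abs Q.[w] = abs E.
  by rewrite {1}eQ hornerD hornerM hornerXsubC hornerC (absD_eq habs).
exists w; split => // [b bB|k]; first by apply: hwB; rewrite inE bB orbT.
by rewrite QwE; apply: le_trans (coefQ k) _; rewrite ge_max hE ltW.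
Qed.

Lemma cauchy_estimate N (c : pseries K N) (a : 'I_N -> K) (r C : R) :
  abs_complete abs -> in_value_group abs r -> analytic_on abs r c -> 0 <= C ->
  (forall x, cball abs a r x -> abs (peval abs c a x) <= C) ->
  forall i, abs (c i) * r ^+ mdeg i <= C.
Proof.
move=> hcomp [t [_ tr]] c_an C0 hC i0; set m := abs (c i0) * r ^+ mdeg i0.
have [m0|m_pos] := lerP m 0; first exact: le_trans m0 C0.
have [M HM] := c_an m m_pos.
have i0M : (mdeg i0 <= M)%N by rewrite leqNgt; apply/negP => /ltnW /HM; rewrite ltxx.
have [] := exists_coef_le_horner (B := [::]) (leqnn (size (kronecker_poly c t M))) => //.
move=> w [w1 _ hw]; pose x j := a j + t * w ^+ (M.+1 ^ j).
have hx : cball abs a r x.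
  apply: vnorm_le => [|j]; first by rewrite -tr (abs_ge0 habs).
  rewrite /x addrC addKr (absM habs) (absX habs) -tr ler_piMr ?(abs_ge0 habs) //.
  by rewrite exprn_ile1 ?(abs_ge0 habs).
have psumM : m <= abs (psum c a x M).
  rewrite -horner_kronecker_poly; apply: le_trans (hw (kronecker M.+1 i0)).
  by rewrite coef_kronecker_poly // (absM habs) (absX habs) tr.
have psum_ge n : (M <= n)%N -> m <= abs (psum c a x n).
  move=> Mn; rewrite -(subrK (psum c a x M) (psum c a x n)) addrC (absD_eq habs) //.
  exact: lt_le_trans (abs_psumB_lt habs m_pos hx HM Mn) psumM.
exact: le_trans (abs_cvg_ge habs (psum_cvg habs c_an hcomp hx) psum_ge) (hC x hx).
Qed.

End ClosedField.

Unset Implicit Arguments. Set Strict Implicit.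
Local Open Scope classical_set_scope.

Theorem lemma22 (R : realType) (K : closedFieldType) (abs : K -> R)
  (habs : is_nonarch_abs abs) (hnt : abs_nontrivial abs)
  (hcomp : abs_complete abs)
  (N : nat) (a : 'I_N -> K) (r : R) (hr : in_value_group abs r)
  (A : set (pseries K N))
  (hA : forall Psi, A Psi -> analytic_on abs r Psi)
  (C : R) (hC : 0 < C)
  (hbound : forall Psi x, A Psi -> cball abs a r x -> abs (peval abs Psi a x) <= C) :
  forall (x y : 'I_N -> K) (Psi Lam : pseries K N),
    cball abs a r x -> cball abs a r y -> A Psi -> A Lam ->
    abs (peval abs Psi a x * peval abs Lam a y - peval abs Psi a y * peval abs Lam a x)
      <= C ^+ 2 / r * vnorm abs (fun i => x i - y i).
Proof.
move=> x y Psi Lam hx hy hPsi hLam.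
have r0 : 0 < r by case: hr => t [t0 <-]; apply: abs_gt0.
set d := vnorm abs (fun i => x i - y i).
have lip Phi : A Phi -> abs (peval abs Phi a x - peval abs Phi a y) <= C / r * d.
  move=> hPhi; apply: (peval_lipschitz habs (hA _ hPhi) hcomp r0 (ltW hC) _ hx hy).
  by apply: (cauchy_estimate habs hcomp hr (hA _ hPhi) (ltW hC)) => z; apply: hbound.
have -> : peval abs Psi a x * peval abs Lam a y - peval abs Psi a y * peval abs Lam a x =
    (peval abs Psi a x - peval abs Psi a y) * peval abs Lam a y
    - peval abs Psi a y * (peval abs Lam a x - peval abs Lam a y) by ring.
have -> : C ^+ 2 / r * d = C / r * d * C by ring.
apply: (absB_le habs); rewrite (absM habs); last rewrite mulrC.
  by apply: ler_pM; rewrite ?(abs_ge0 habs) ?lip ?hbound.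
by apply: ler_pM; rewrite ?(abs_ge0 habs) ?lip ?hbound.
Qed.
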